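(* Let $\overline{SB}$ be the output of Algorithm 1 on $\widetilde G$ and $M$, and let $SB^\ast$ be a minimum satellite bridge for $M$. Then $\overline{SB}$ is a satellite bridge for $M$ and $|N(\overline{SB})|\le \big(3\rho H(\Delta+1)+\rho\big)\,|N(SB^\ast)|$, where $\Delta$ is the maximum degree of $G$, $H(n)=\sum_{k=1}^n 1/k$ is the harmonic number, and $\rho$ is the approximation ratio of the Steiner tree procedure used in Algorithm 1.
   Context: Let $G=(V,E)$ be a finite, simple, undirected, connected graph with $|V|\ge 2$ and maximum degree $\Delta$. Fix a positive integer $K$ and, for every $u\in V$, a nonempty set $\Gamma(u)\subseteq\{1,\dots,K\}$. Let $nb_G(u)$ be the neighbours of $u$ in $G$. For a tree $T$, $N(T)$ and $E(T)$ are its vertex and edge sets. The extended graph $\widetilde G=(\widetilde V,\widetilde E)$ of $G$: (i) initially $\widetilde V=V$, $\widetilde E=\emptyset$; (ii) for each $u\in V$ and each $i\in\bigcup_{v\in nb_G(u)}\Gamma(v)$, add a new vertex $\lambda(u,i)$ (satellite node of $u$; $u$ is its nuclear node); $\Psi(u)$ is the set of satellite nodes of $u$; (iii) for each $u\in V$, join every pair of distinct vertices of $\Psi(u)\cup\{u\}$; (iv) for each edge $\{u,v\}\in E$ (in each orientation $(u,v)$), each $i\in\Gamma(v)$, $j\in\Gamma(u)$, add edges $\{\lambda(u,i),\lambda(v,j)\}$, $\{\lambda(u,i),v\}$, $\{u,\lambda(v,j)\}$. $V_S=\widetilde V\setminus V$ is the set of satellite nodes, $\widetilde G_s$ the subgraph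 of $\widetilde G$ induced by $V_S$, and $nb_{\widetilde G}(x)$ the neighbourhood of $x$ in $\widetilde G$. Given $M\subseteq V$, a satellite bridge is a (nonempty) subtree $SB$ of $\widetilde G$ all of whose vertices are satellite nodes and such that every vertex of $M$ is adjacent in $\widetilde G$ to at least one vertex of $SB$. A minimum satellite bridge is one with the minimum number of vertices. Algorithm 1 (input $\widetilde G$, $M$): set $C=\emptyset$, $UC=M$. While $UC\neq\emptyset$: pick $v\in V_S\setminus C$ maximizing $|nb_{\widetilde G}(v)\cap UC|$ (ties broken arbitrarily), set $C=C\cup\{v\}$ and $UC=UC\setminus nb_{\widetilde G}(v)$. Then compute a tree $ST$ in $\widetilde G_s$ with $C\subseteq N(ST)$ and $|E(ST)|\le\rho\cdot\min\{|E(T')|: T'$ a tree in $\widetilde G_s$ with $C\subseteq N(T')\}$, using a fixed $\rho$-approximation algorithm ($\rho\ge 1$) for the unit-weight Steiner tree problem. Output $\overline{SB}=ST$. *)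

From HB Require Import structures.
From mathcomp Require Import all_boot all_order all_algebra.
Set Implicit Arguments. Unset Strict Implicit. Unset Printing Implicit Defensive.
Import Order.TTheory GRing.Theory Num.Theory.

Section Extended.
Variables (V : finType) (e : rel V) (K : nat) (Gamma : V -> {set 'I_K}).

(* Vertices of the extended graph live in V + V * 'I_K:
   inl u is the nuclear node u, inr (u,i) is the satellite node lambda(u,i)
   (present only when i is in the union of Gamma over the neighbours of u).
   Colours {1..K} are represented by 'I_K = {0..K-1}. *)
Definition XV : finType := (V + (V * 'I_K))%type.

Definition lam (u : V) (i : 'I_K) : XV := inr (u, i).

Definition nucleus (x : XV) : V :=
  match x with inl u => u | inr (u, _) => u end.

Definition is_sat (x : XV) : bool :=
  match x with
  | inl _ => false
  | inr (u, i) => [exists v, e u v && (i \in Gamma v)]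
  end.

Definition ext_vertex (x : XV) : bool :=
  match x with inl _ => true | inr _ => is_sat x end.

Definition VS : {set XV} := [set x | is_sat x].

(* edges added in step (iv), for the oriented edge (u,v) *)
Definition ext_edge_raw (x y : XV) : bool :=
  [exists u : V, exists v : V, exists i : 'I_K, exists j : 'I_K,
     [&& e u v, i \in Gamma v, j \in Gamma u &
        [|| (x == lam u i) && (y == lam v j),
            (x == lam u i) && (y == inl v) |
            (x == inl u) && (y == lam v j)]]].

(* adjacency in the extended graph: step (iii) cliques on Psi(u) U {u},
   and step (iv) edges (undirected) *)
Definition ext_adj (x y : XV) : bool :=
  (x != y) &&
  [|| [&& ext_vertex x, ext_vertex y & nucleus x == nucleus y],
      ext_edge_raw x y | ext_edge_raw y x].

Definition is_tree_in (W : {set XV}) (N : {set XV}) (E : {set {set XV}}) : Prop :=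
  [/\ N != set0, N \subset W,
      (forall f, f \in E -> exists x y,
          [/\ f = [set x; y], x != y, x \in N, y \in N & ext_adj x y]),
      (forall x y, x \in N -> y \in N ->
          connect (fun a b => [set a; b] \in E) x y) &
      #|E| = (#|N| - 1)%N].

Definition satellite_bridge (M : {set V}) (N : {set XV}) (E : {set {set XV}}) : Prop :=
  is_tree_in VS N E /\
  (forall m, m \in M -> exists2 x, x \in N & ext_adj (inl m) x).

Definition min_satellite_bridge (M : {set V}) (N : {set XV}) (E : {set {set XV}}) : Prop :=
  satellite_bridge M N E /\
  (forall N' E', satellite_bridge M N' E' -> (#|N| <= #|N'|)%N).

(* Greedy phase of Algorithm 1: s lists the chosen nodes in order. *)
Definition uncovered (M : {set V}) (s : seq XV) (t : nat) : {set V} :=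
  [set m in M | ~~ has (ext_adj (inl m)) (take t s)].

Definition gain (M : {set V}) (s : seq XV) (t : nat) (x : XV) : nat :=
  #|[set m in uncovered M s t | ext_adj x (inl m)]|.

Definition greedy_run (M : {set V}) (s : seq XV) : Prop :=
  [/\ uniq s, {subset s <= VS},
      (forall t, (t < size s)%N ->
         uncovered M s t != set0 /\
         (forall v, v \in VS -> v \notin take t s ->
            (gain M s t v <= gain M s t (nth v s t))%N)) &
      uncovered M s (size s) = set0].

Definition steiner_approx (R : realFieldType) (rho : R) (C : {set XV})
    (N : {set XV}) (E : {set {set XV}}) : Prop :=
  [/\ is_tree_in VS N E, C \subset N &
      forall N' E', is_tree_in VS N' E' -> C \subset N' ->
        (#|E|%:R <= rho * #|E'|%:R)%R].

End Extended.

Definition max_degree (V : finType) (e : rel V) : nat :=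
  \max_(u : V) #|[set v | e u v]|.

Definition harmonic (R : realFieldType) (n : nat) : R :=
  (\sum_(1 <= k < n.+1) (k%:R)^-1)%R.

From HB Require Import structures.
From mathcomp Require Import all_boot all_order all_algebra ring.
Import Order.TTheory GRing.Theory Num.Theory.

Set Implicit Arguments.
Unset Strict Implicit.
Unset Printing Implicit Defensive.

(* The greedy phase is greedy set cover for the sets of nuclear neighbours of
   satellite nodes, each of size at most Delta + 1.  The nodes Nopt of an
   optimal bridge form a cover, so the harmonic charging argument bounds the
   number of chosen nodes by H(Delta + 1) |Nopt|.  Every chosen node is
   adjacent to some m in M, hence reaches Nopt through the clique Psi(m) by a
   walk of at most three satellite edges; so the optimal bridge extends to a
   tree of G_s through all chosen nodes with at most |Nopt| + 3 |C| nodes, and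
   the rho-approximation bounds |N(SB)| by rho times that. *)

Section ExtendedGraph.
Variables (V : finType) (e : rel V) (K : nat) (Gamma : V -> {set 'I_K}).
Hypothesis e_sym : symmetric e.
Hypothesis e_irr : irreflexive e.
Hypothesis Gamma_neq0 : forall u, Gamma u != set0.

Local Notation XV := (XV V K).
Local Notation adj := (ext_adj e Gamma).
Local Notation VS := (VS e Gamma).

Lemma ext_adj_sym (x y : XV) : adj x y = adj y x.
Proof.
rewrite /ext_adj eq_sym (eq_sym (nucleus x)) andbCA; congr (_ && (_ || _)).
exact: orbC.
Qed.

Lemma ext_adj_lam_inl u i m :
  adj (lam u i) (inl m) -> m = u \/ e u m /\ i \in Gamma m.
Proof.
case/andP=> _ /or3P[/and3P[_ _ /eqP /= ->]|h|h]; first by left.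
all: move: h => /existsP[u' /existsP[v /existsP[i' /existsP[j]]]];
  case/and4P=> euv iv ju; case/or3P=> /andP[/eqP xy /eqP yz] //.
- by case: xy yz => -> -> [->]; right.
- by case: xy yz => -> [-> ->]; right; rewrite e_sym.
Qed.

Lemma is_sat_lam m u a : e m u -> a \in Gamma u -> is_sat e Gamma (lam m a).
Proof. by move=> emu au; apply/existsP; exists u; rewrite emu. Qed.

Lemma ext_adj_lam_lam u v i j :
  e u v -> i \in Gamma v -> j \in Gamma u -> adj (lam u i) (lam v j).
Proof.
move=> euv iv ju; apply/andP; split.
  by apply/eqP=> -[uv _]; rewrite uv e_irr in euv.
apply/or3P/Or32/existsP; exists u; apply/existsP; exists v.
by apply/existsP; exists i; apply/existsP; exists j; rewrite euv iv ju !eqxx.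
Qed.

Lemma ext_adj_lam_clique m a b :
  is_sat e Gamma (lam m a) -> is_sat e Gamma (lam m b) ->
  lam m a != lam m b -> adj (lam m a) (lam m b).
Proof. by rewrite /ext_adj /= => -> -> ->; rewrite eqxx. Qed.

(* A satellite node lambda(u,i) is adjacent only to nuclear nodes in N[u]. *)
Lemma card_ext_adj_inl_le x :
  x \in VS -> #|[set m | adj x (inl m)]| <= max_degree e + 1.
Proof.
rewrite inE; case: x => [//|[u i]] _.
have sub_nbhs : [set m | adj (lam u i) (inl m)] \subset u |: [set v | e u v].
  apply/subsetP=> m; rewrite !inE => /ext_adj_lam_inl [->|[eum _]].
    by rewrite eqxx.
  by rewrite eum orbT.
apply: leq_trans (subset_leq_card sub_nbhs) _.
rewrite cardsU1 addnC leq_add ?leq_b1 //.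
exact: (@leq_bigmax V (fun w => #|[set v | e w v]|) u).
Qed.

Lemma card_tree_in W N E : is_tree_in e Gamma W N E -> #|N| = #|E|.+1.
Proof. by case=> N_neq0 _ _ _ ->; rewrite subn1 prednK // card_gt0. Qed.

Lemma is_tree_in_setU1 W N E x y :
  is_tree_in e Gamma W N E -> x \in N -> y \in W -> y \notin N -> adj x y ->
  is_tree_in e Gamma W (y |: N) ([set x; y] |: E).
Proof.
move=> [N_neq0 sNW E_edges N_conn cardE] xN yW yNN axy.
have xNy : x != y by apply: contraNneq yNN => <-.
have xyNE : [set x; y] \notin E.
  apply/negP=> /E_edges [a [b [eq_ab _ aN bN _]]].
  have : y \in [set a; b] by rewrite -eq_ab !inE eqxx orbT.
  by case/set2P=> y_ab; rewrite y_ab ?aN ?bN in yNN.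
set E' := [set x; y] |: E.
have conn_E a b : connect (fun a b => [set a; b] \in E) a b ->
    connect (fun a b => [set a; b] \in E') a b.
  by apply: connect_sub => c d cd; apply: connect1; rewrite setU1r.
have conn_xy : connect (fun a b => [set a; b] \in E') x y.
  by apply: connect1; rewrite setU11.
have conn_yx : connect (fun a b => [set a; b] \in E') y x.
  by apply: connect1; rewrite setUC setU11.
split.
- by apply/set0Pn; exists y; rewrite setU11.
- by rewrite subUset sub1set yW.
- move=> f /setU1P[->|/E_edges [a [b [-> ab aN bN adj_ab]]]].
    by exists x, y; rewrite setU11 setU1r.
  by exists a, b; rewrite !setU1r.
- move=> a b /setU1P[->|aN] /setU1P[->|bN].
  + exact: connect0.
  + exact: connect_trans conn_yx (conn_E _ _ (N_conn _ _ xN bN)).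
  + exact: connect_trans (conn_E _ _ (N_conn _ _ aN xN)) conn_xy.
  + exact: conn_E _ _ (N_conn _ _ aN bN).
- by rewrite !cardsU1 xyNE yNN cardE !add1n !subn1 /= prednK // card_gt0.
Qed.

Definition ext_adjr (x y : XV) : bool := (x == y) || adj x y.

Lemma tree_in_extend_path W N E x p :
  is_tree_in e Gamma W N E -> x \in N ->
  path ext_adjr x p -> {subset p <= W} ->
  exists N' E', [/\ is_tree_in e Gamma W N' E', N \subset N',
    {subset p <= N'} & #|N'| <= #|N| + size p].
Proof.
elim: p x N E => [|y p IHp] x N E tree xN /=.
  by move=> _ _; exists N, E; rewrite addn0.
case/andP=> xy yp ypW.
have yW : y \in W by apply: ypW; rewrite mem_head.
have pW : {subset p <= W} by move=> z zp; apply: ypW; rewrite inE zp orbT.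
have [yN|yNN] := boolP (y \in N).
  have [N' [E' [tree' sNN' pN' cardN']]] := IHp y N E tree yN yp pW.
  exists N', E'; split=> //; last by rewrite addnS ltnW.
  by move=> z /predU1P[->|/pN' //]; apply: (subsetP sNN').
have axy : adj x y by case/orP: xy => // /eqP xy; rewrite -xy xN in yNN.
have [N' [E' [tree' sNN' pN' cardN']]] :=
  IHp y _ _ (is_tree_in_setU1 tree xN yW yNN axy) (setU11 y N) yp pW.
exists N', E'; split=> //.
- exact: subset_trans (subsetUr _ _) sNN'.
- by move=> z /predU1P[->|/pN' //]; apply: (subsetP sNN'); rewrite setU11.
- by rewrite (leq_trans cardN') // cardsU1 yNN addnS add1n.
Qed.

Lemma ext_adjr_sym : symmetric ext_adjr.
Proof. by move=> x y; rewrite /ext_adjr eq_sym ext_adj_sym. Qed.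

Lemma satellite_near_lam x m :
  x \in VS -> adj x (inl m) ->
  exists a, lam m a \in VS /\ ext_adjr x (lam m a).
Proof.
rewrite inE; case: x => [//|[u i]] x_sat /ext_adj_lam_inl [->|[eum im]].
  by exists i; rewrite /ext_adjr eqxx inE.
have [a au] := set0Pn _ (Gamma_neq0 u).
exists a; split; last by rewrite /ext_adjr ext_adj_lam_lam ?orbT.
by rewrite inE; apply: (is_sat_lam (u := u)); rewrite // e_sym.
Qed.

Lemma satellite_walk x y m :
  x \in VS -> y \in VS -> adj x (inl m) -> adj y (inl m) ->
  exists a b, [/\ path ext_adjr x [:: lam m a; lam m b; y],
    lam m a \in VS & lam m b \in VS].
Proof.
move=> xS yS axm aym.
have [a [aS xa]] := satellite_near_lam xS axm.
have [b [bS yb]] := satellite_near_lam yS aym.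
exists a, b; rewrite /= xa (ext_adjr_sym _ y) yb !andbT; split=> //.
rewrite /ext_adjr; case: eqP => //= /eqP ab.
by apply: ext_adj_lam_clique; [move: aS | move: bS | ]; rewrite ?inE.
Qed.

Lemma tree_in_through_adjacent M Nopt Eopt (l : seq XV) :
  satellite_bridge e Gamma M Nopt Eopt -> {subset l <= VS} ->
  (forall c, c \in l -> exists2 m, m \in M & adj c (inl m)) ->
  exists N' E', [/\ is_tree_in e Gamma VS N' E', Nopt \subset N',
    {subset l <= N'} & #|N'| <= #|Nopt| + 3 * size l].
Proof.
move=> [tree_opt cover_opt]; elim: l => [|c l IHl] lS l_adj.
  by exists Nopt, Eopt; rewrite addn0.
have [N1 [E1 [tree1 sN1 lN1 cardN1]]] : exists N' E',
    [/\ is_tree_in e Gamma VS N' E', Nopt \subset N',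
      {subset l <= N'} & #|N'| <= #|Nopt| + 3 * size l].
  by apply: IHl => z zl; [apply: lS | apply: l_adj]; rewrite inE zl orbT.
have cS : c \in VS by apply: lS; rewrite mem_head.
have [m mM acm] := l_adj c (mem_head c l).
have [x xNopt amx] := cover_opt m mM.
have xS : x \in VS by case: tree_opt => _ /subsetP NoptS _ _ _; apply: NoptS.
rewrite ext_adj_sym in amx.
have [a [b [walk aS bS]]] := satellite_walk xS cS amx acm.
have walkS : {subset [:: lam m a; lam m b; c] <= VS}.
  by move=> z; rewrite !inE => /or3P[] /eqP ->; rewrite -?inE.
have [N' [E' [tree' sN1N' walkN' cardN']]] :=
  tree_in_extend_path tree1 (subsetP sN1 x xNopt) walk walkS.
exists N', E'; split=> //.
- exact: subset_trans sN1 sN1N'.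
- move=> z /predU1P[->|/lN1 /(subsetP sN1N') //].
  by apply: walkN'; rewrite !inE eqxx !orbT.
- by rewrite (leq_trans cardN') //= mulnS addnCA addnC leq_add2l.
Qed.

Lemma card_steiner_approx_le (R : realFieldType) (rho : R) (C N N' : {set XV})
    (E E' : {set {set XV}}) :
  (1 <= rho)%R -> steiner_approx e Gamma rho C N E ->
  is_tree_in e Gamma VS N' E' -> C \subset N' ->
  (#|N|%:R <= rho * #|N'|%:R :> R)%R.
Proof.
move=> rho_ge1 [tree CN approx] tree' CN'.
rewrite (card_tree_in tree) (card_tree_in tree') !mulrS mulrDr mulr1.
exact: lerD (approx N' E' tree' CN').
Qed.

End ExtendedGraph.

Section Harmonic.
Variable R : realFieldType.
Local Open Scope ring_scope.
Local Notation H := (harmonic R).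

Lemma harmonic_ge0 n : 0 <= H n.
Proof. by apply: sumr_ge0 => k _; rewrite invr_ge0 ler0n. Qed.

Lemma harmonic_split m n : (m <= n)%N ->
  H n = H m + \sum_(m.+1 <= k < n.+1) k%:R^-1.
Proof. by move=> mn; rewrite /harmonic (@big_cat_nat _ _ _ m.+1). Qed.

Lemma ler_harmonic : {homo H : m n / (m <= n)%N >-> m <= n}.
Proof.
move=> m n mn; rewrite (harmonic_split mn) lerDl.
by apply: sumr_ge0 => k _; rewrite invr_ge0 ler0n.
Qed.

Lemma harmonic_increment_ge b d g : (b + d <= g)%N ->
  d%:R / g%:R <= H (b + d) - H b.
Proof.
move=> bdg; rewrite (harmonic_split (leq_addr d b)) addrAC subrr add0r.
have -> : d%:R / g%:R = \sum_(b.+1 <= k < (b + d).+1) (g%:R : R)^-1.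
  by rewrite sumr_const_nat subSS addKn mulrC mulr_natr.
apply: ler_sum_nat => k /andP[bk kbd].
have k_gt0 : (0 < k)%N by apply: leq_ltn_trans bk.
have kg : (k <= g)%N by apply: leq_trans bdg; rewrite -ltnS.
by rewrite lef_pV2 ?posrE ?ltr0n ?ler_nat // (leq_trans k_gt0).
Qed.

End Harmonic.

Section Greedy.
Variables (V : finType) (e : rel V) (K : nat) (Gamma : V -> {set 'I_K}).
Hypothesis e_sym : symmetric e.
Variables (M : {set V}) (s : seq (XV V K)).

Local Notation adj := (ext_adj e Gamma).
Local Notation VS := (VS e Gamma).
Local Notation U := (uncovered e Gamma M s).
Local Notation gain := (gain e Gamma M s).

Definition covered_at t : {set V} := U t :\: U t.+1.

Lemma uncovered_subS t : U t.+1 \subset U t.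
Proof.
apply/subsetP=> m; rewrite !inE => /andP[-> /=]; apply: contra.
by rewrite -[take t.+1 s](cat_take_drop t) take_takel // has_cat => ->.
Qed.

Lemma in_covered_at d t m : (t < size s)%N ->
  (m \in covered_at t) = (m \in U t) && adj (inl m) (nth d s t).
Proof.
move=> ts; rewrite !inE (take_nth d ts) has_rcons.
by case: (m \in M); case: (adj _ _); case: has.
Qed.

Lemma gainS t x :
  gain t x = (gain t.+1 x + #|[set m in covered_at t | adj x (inl m)]|)%N.
Proof.
rewrite /gain -(cardsID (U t.+1) [set m in U t | adj x (inl m)]).
congr addn; apply: eq_card => m; rewrite !inE; last by rewrite andbA.
have := subsetP (uncovered_subS t) m; rewrite !inE.
move: (m \in M) (has _ (take t s)) (has _ (take t.+1 s)) (adj x _).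
by move=> [] [] [] [] //= /(_ isT).
Qed.

Lemma gain_nth d t : (t < size s)%N -> gain t (nth d s t) = #|covered_at t|.
Proof.
move=> ts; apply: eq_card => m.
by rewrite (in_covered_at d) // in_set ext_adj_sym.
Qed.

Lemma gain_gt0_notin_take t x : (0 < gain t x)%N -> x \notin take t s.
Proof.
case/card_gt0P=> m; rewrite !inE => /andP[/andP[_ mU] axm].
by apply: contra mU => xt; apply/hasP; exists x; rewrite // ext_adj_sym.
Qed.

Lemma gain_le_max_degree t x : x \in VS -> (gain t x <= max_degree e + 1)%N.
Proof.
move=> xS; apply: leq_trans (card_ext_adj_inl_le e_sym xS).
by apply: subset_leq_card; apply/subsetP=> m; rewrite !inE => /andP[].
Qed.

Hypothesis run : greedy_run e Gamma M s.

Lemma greedy_run_covers m : m \in M -> exists2 x, x \in s & adj (inl m) x.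
Proof.
case: run => _ _ _ U_end mM.
have : m \notin U (size s) by rewrite U_end inE.
by rewrite inE mM take_size negbK => /hasP.
Qed.

Lemma gain_le_card_covered_at t x : (t < size s)%N -> x \in VS ->
  (0 < gain t x)%N -> (gain t x <= #|covered_at t|)%N.
Proof.
move=> ts xS /gain_gt0_notin_take xt; case: run => _ _ /(_ t ts) [_ greedy] _.
by rewrite -(gain_nth x ts) greedy.
Qed.

Variable Nopt : {set XV V K}.
Hypothesis Nopt_sub : Nopt \subset VS.
Hypothesis Nopt_cover :
  forall m, m \in M -> exists2 x, x \in Nopt & adj (inl m) x.

Lemma card_covered_at_gt0 t : (t < size s)%N -> (0 < #|covered_at t|)%N.
Proof.
move=> ts; case: run => _ _ /(_ t ts) [/set0Pn[m mU] _] _.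
have [x xNopt amx] := Nopt_cover (setIdP mU).1.
have gain_gt0 : (0 < gain t x)%N.
  by apply/card_gt0P; exists m; rewrite inE mU ext_adj_sym.
by apply: leq_trans gain_gt0 (gain_le_card_covered_at ts _ gain_gt0);
  apply: (subsetP Nopt_sub).
Qed.

Lemma greedy_run_chosen_adj c : c \in s -> exists2 m, m \in M & adj c (inl m).
Proof.
move=> cs; have ts : (index c s < size s)%N by rewrite index_mem.
have /card_gt0P[m] := card_covered_at_gt0 ts.
rewrite (in_covered_at c _ ts) nth_index // => /andP[/setIdP[mM _] amc].
by exists m; rewrite // ext_adj_sym.
Qed.

Lemma card_covered_at_le_sum t :
  (#|covered_at t|
    <= \sum_(x in Nopt) #|[set m in covered_at t | adj x (inl m)]|)%N.
Proof.
have card_sep (x : XV V K) : #|[set m in covered_at t | adj x (inl m)]| =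
    (\sum_(m in covered_at t) adj x (inl m))%N.
  by rewrite -sum1_card big_mkcond [RHS]big_mkcond; apply: eq_bigr => m _;
    rewrite inE; case: (_ \in _); case: adj.
under eq_bigr => x _ do rewrite card_sep.
rewrite exchange_big -sum1_card; apply: leq_sum => m /setDP[/setIdP[mM _] _].
have [x xNopt amx] := Nopt_cover mM.
by rewrite (bigD1 x) //= ext_adj_sym amx leq_addr.
Qed.

Local Open Scope ring_scope.
Variable R : realFieldType.
Local Notation H := (harmonic R).

(* Charging each newly covered m the amount 1/|covered_at t|: the nodes of
   Nopt adjacent to m share its charge, and the greedy choice bounds the
   share of x by the decrease of H along the gains of x. *)
Lemma greedy_step_charge t : (t < size s)%N ->
  1 <= \sum_(x in Nopt) (H (gain t x) - H (gain t.+1 x)).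
Proof.
move=> ts; set D := #|covered_at t|.
have D_gt0 : (0 < D)%N := card_covered_at_gt0 ts.
apply: (@le_trans _ _ (\sum_(x in Nopt)
    #|[set m in covered_at t | adj x (inl m)]|%:R / D%:R)).
  rewrite -mulr_suml -natr_sum ler_pdivlMr ?ltr0n // mul1r ler_nat.
  exact: card_covered_at_le_sum.
apply: ler_sum => x xNopt; rewrite [in H (gain t x)]gainS.
set d := #|[set m in covered_at t | adj x (inl m)]|.
have [->|d_gt0] := posnP d; first by rewrite mul0r addn0 subrr.
have gain_gt0 : (0 < gain t x)%N by rewrite gainS (leq_trans d_gt0) ?leq_addl.
apply: harmonic_increment_ge; rewrite -gainS.
exact: gain_le_card_covered_at ts (subsetP Nopt_sub x xNopt) gain_gt0.
Qed.

Lemma greedy_size_le : (size s)%:R <= #|Nopt|%:R * H (max_degree e + 1).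
Proof.
apply: (@le_trans _ _ (\sum_(0 <= t < size s)
    \sum_(x in Nopt) (H (gain t x) - H (gain t.+1 x)))).
  rewrite -[X in X%:R](subn0 (size s)) -sumr_const_nat.
  by apply: ler_sum_nat => t /andP[_]; apply: greedy_step_charge.
rewrite exchange_big /= mulr_natl -sumr_const; apply: ler_sum => x xNopt.
rewrite (telescope_sumr_eq (fun t => - H (gain t x))) // => [|t _]; last first.
  by rewrite opprK addrC.
have xS : x \in VS := subsetP Nopt_sub x xNopt.
rewrite opprK addrC (le_trans _ (ler_harmonic R (gain_le_max_degree 0 xS))) //.
by rewrite gerBl harmonic_ge0.
Qed.

End Greedy.

Theorem theorem2 (R : realFieldType) (V : finType) (e : rel V) (K : nat)
  (Gamma : V -> {set 'I_K}) (rho : R) (M : {set V})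
  (s : seq (XV V K)) (N : {set XV V K}) (E : {set {set XV V K}})
  (Nopt : {set XV V K}) (Eopt : {set {set XV V K}}) :
  symmetric e -> irreflexive e ->
  (forall u v, connect e u v) -> (1 < #|V|)%N ->
  (forall u, Gamma u != set0) ->
  (1 <= rho)%R ->
  greedy_run e Gamma M s ->
  steiner_approx e Gamma rho [set x in s] N E ->
  min_satellite_bridge e Gamma M Nopt Eopt ->
  satellite_bridge e Gamma M N E /\
  (#|N|%:R <= (3%:R * rho * harmonic R (max_degree e + 1) + rho) * #|Nopt|%:R)%R.
Proof.
move=> e_sym e_irr _ _ Gamma_neq0 rho_ge1 run steiner [bridge_opt _].
have [[_ Nopt_sub _ _ _] Nopt_cover] := bridge_opt.
have [tree C_sub _] := steiner.
split.
  split=> // m /(greedy_run_covers run) [x xs amx].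
  by exists x => //; apply: (subsetP C_sub); rewrite inE.
have [_ s_sub _ _] := run.
have [N' [E' [tree' _ sN' cardN']]] := tree_in_through_adjacent e_sym e_irr
  Gamma_neq0 bridge_opt s_sub (greedy_run_chosen_adj run Nopt_sub Nopt_cover).
have C_sub' : [set x in s] \subset N'.
  by apply/subsetP=> z; rewrite inE; apply: sN'.
have le_s := greedy_size_le e_sym run Nopt_sub Nopt_cover R.
have rho_ge0 : (0 <= rho)%R := le_trans ler01 rho_ge1.
apply: (le_trans (card_steiner_approx_le rho_ge1 steiner tree' C_sub')).
have cardN'_R : (#|N'|%:R <= #|Nopt|%:R + 3%:R * (size s)%:R :> R)%R.
  by rewrite -natrM -natrD ler_nat.
apply: (le_trans (ler_wpM2l rho_ge0 cardN'_R)).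
set k := (#|Nopt|%:R : R)%R; set h := harmonic R _.
have -> : ((3%:R * rho * h + rho) * k = rho * (k + 3%:R * (k * h)))%R by ring.
by rewrite ler_wpM2l // lerD2l ler_wpM2l.
Qed.
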